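(* Let $b_+,b_->0$, $\delta_\pm\in\mathbb R$ with $b_\pm+\delta_\pm>0$, $c>0$, and $k\in[-\pi,\pi)$, and assume that either $k\neq 0$ or both $\delta_+\neq0$ and $\delta_-\ne0$. Let $v_1(b_+,\delta_+,k)$ be an eigenvector of $P(b_+,\delta_+,k)$ for its eigenvalue $\lambda_1$ of modulus less than $1$, and $v_2(b_-,\delta_-,k)$ an eigenvector of $P(b_-,\delta_-,k)$ for its eigenvalue $\lambda_2$ of modulus greater than $1$. Then $0$ is a two-fold eigenvalue of the type-I interface Hamiltonian $\hat H_{\mathrm I}(k)$ (its eigenspace in $\ell^2(\mathbb Z;\mathbb C^6)$ is two-dimensional) if and only if there is a nonzero constant $g\in\mathbb C$ with $$\begin{pmatrix}1&0\\0&\frac{(b_++\delta_+)(b_-+\delta_-)}{c^2}\end{pmatrix}v_1(b_+,\delta_+,k)=g\,v_2(b_-,\delta_-,k).$$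
   Context: Matrices: for $b>0$, $b+\varepsilon>0$, $k\in\mathbb R$ let $A_1=\begin{pmatrix}-b&0\\-b&-(b+\varepsilon)e^{-ik}\end{pmatrix}$, $A_2=\begin{pmatrix}-b&-(b+\varepsilon)e^{ik}\\0&-b\end{pmatrix}$, $A_3=\begin{pmatrix}-(b+\varepsilon)e^{-ik}&0\\-b&-b\end{pmatrix}$, $A_4=\begin{pmatrix}-b&-b\\0&-(b+\varepsilon)\end{pmatrix}$, $A_5=\begin{pmatrix}-b&0\\-(b+\varepsilon)e^{ik}&-b\end{pmatrix}$, $A_6=\begin{pmatrix}-(b+\varepsilon)&-b\\0&-b\end{pmatrix}$, and $P(b,\varepsilon,k)=-A_6^{-1}A_5A_4^{-1}A_3A_2^{-1}A_1$; when $k\ne0$ or $\varepsilon\neq0$ it has two distinct eigenvalues $\lambda_1,\lambda_2$ with $0<|\lambda_1|<1<|\lambda_2|$. Operator: for $n\in\mathbb Z$ let $b_n=b_+$ ($n\ge0$), $b_n=b_-$ ($n\le-1$); $c_n=b_++\delta_+$ ($n\ge0$), $c_{-1}=c$, $c_n=b_-+\delta_-$ ($n\le-2$); $d_n=b_++\delta_+$ ($n\ge0$), $d_n=b_-+\delta_-$ ($n\le-1$). $\hat H_{\mathrm I}(k)$ acts on $u=\{(u_{j,n})_{j=1}^6\}_{n\in\mathbb Z}\in\ell^2(\mathbb Z;\mathbb C^6)$ by $(\hat H_{\mathrm I}(k)u)_{1,n}=-b_nu_{4,n}-b_nu_{5,n}-c_{n-1}e^{-ik}u_{6,n-1}$,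 $(\hat H_{\mathrm I}(k)u)_{2,n}=-b_nu_{4,n}-d_ne^{ik}u_{5,n}-b_nu_{6,n}$, $(\hat H_{\mathrm I}(k)u)_{3,n}=-c_nu_{4,n+1}-b_nu_{5,n}-b_nu_{6,n}$, $(\hat H_{\mathrm I}(k)u)_{4,n}=-b_nu_{1,n}-b_nu_{2,n}-c_{n-1}u_{3,n-1}$, $(\hat H_{\mathrm I}(k)u)_{5,n}=-b_nu_{1,n}-d_ne^{-ik}u_{2,n}-b_nu_{3,n}$, $(\hat H_{\mathrm I}(k)u)_{6,n}=-c_ne^{ik}u_{1,n+1}-b_nu_{2,n}-b_nu_{3,n}$. *)

From HB Require Import structures.
From mathcomp Require Import all_boot all_order all_algebra.
From mathcomp Require Import complex.
From mathcomp Require Import reals trigo.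
Set Implicit Arguments. Unset Strict Implicit. Unset Printing Implicit Defensive.
Import Order.TTheory GRing.Theory Num.Theory.
Local Open Scope ring_scope.

Section Defs.
Variable R : realType.
Local Notation C := R[i].

Definition expi (k : R) : C := Complex (cos k) (sin k).

Definition mx2 (a b c d : C) : 'M[C]_2 :=
  \matrix_(i < 2, j < 2)
    if i == ord0 then (if j == ord0 then a else b) else (if j == ord0 then c else d).

Definition rC (x : R) : C := Complex x 0.

Definition Pmat (b eps k : R) : 'M[C]_2 :=
  let B := rC b in let E := rC (b + eps) in
  let A1 := mx2 (- B) 0 (- B) (- E * expi (- k)) in
  let A2 := mx2 (- B) (- E * expi k) 0 (- B) in
  let A3 := mx2 (- E * expi (- k)) 0 (- B) (- B) in
  let A4 := mx2 (- B) (- B) 0 (- E) in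
  let A5 := mx2 (- B) 0 (- E * expi k) (- B) in
  let A6 := mx2 (- E) (- B) 0 (- B) in
  - (invmx A6 *m A5 *m invmx A4 *m A3 *m invmx A2 *m A1).

Definition bseq (bp bm : R) (n : int) : R := if (0 <= n)%R then bp else bm.
Definition cseq (bp bm dp dm c : R) (n : int) : R :=
  if (0 <= n)%R then bp + dp else if n == (-1)%R then c else bm + dm.
Definition dseq (bp bm dp dm : R) (n : int) : R :=
  if (0 <= n)%R then bp + dp else bm + dm.

(* sequences u = {(u_{j,n})_{j=1..6}}_{n in Z}; component j (1-based) is u n (inord (j-1)) *)
Definition seq6 := int -> 'I_6 -> C.
Definition cmp (u : seq6) (j : nat) (n : int) : C := u n (@inord 5 j.-1).

Definition HI (bp bm dp dm c k : R) (u : seq6) : seq6 :=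
  fun n j =>
  let b m := rC (bseq bp bm m) in
  let cc m := rC (cseq bp bm dp dm c m) in
  let d m := rC (dseq bp bm dp dm m) in
  match nat_of_ord j with
  | 0 => - b n * cmp u 4 n - b n * cmp u 5 n - cc (n - 1) * expi (- k) * cmp u 6 (n - 1)
  | 1 => - b n * cmp u 4 n - d n * expi k * cmp u 5 n - b n * cmp u 6 n
  | 2 => - cc n * cmp u 4 (n + 1) - b n * cmp u 5 n - b n * cmp u 6 n
  | 3 => - b n * cmp u 1 n - b n * cmp u 2 n - cc (n - 1) * cmp u 3 (n - 1)
  | 4 => - b n * cmp u 1 n - d n * expi (- k) * cmp u 2 n - b n * cmp u 3 n
  | _ => - cc n * expi k * cmp u 1 (n + 1) - b n * cmp u 2 n - b n * cmp u 3 n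
  end.

Definition l2 (u : seq6) : Prop :=
  exists M : R, forall N : nat,
    \sum_(i < N) \sum_(j < 6) (`|u (i%:Z) j| ^+ 2 + `|u (- (i%:Z) - 1) j| ^+ 2) <= rC M.

Definition kernel_l2 (H : seq6 -> seq6) (u : seq6) : Prop :=
  l2 u /\ forall n j, H u n j = 0.

Definition dim2 (K : seq6 -> Prop) : Prop :=
  exists u1 u2 : seq6, K u1 /\ K u2 /\
    (forall a1 a2 : C, (forall n j, a1 * u1 n j + a2 * u2 n j = 0) -> a1 = 0 /\ a2 = 0) /\
    (forall u, K u -> exists a1 a2 : C, forall n j, u n j = a1 * u1 n j + a2 * u2 n j).

End Defs.

From Pilot Require Import Defs.
From HB Require Import structures.
From mathcomp Require Import all_boot all_order all_algebra.
From mathcomp Require Import complex.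
From mathcomp Require Import reals trigo.
From mathcomp Require Import ring lra zify.
Import Order.TTheory GRing.Theory Num.Theory.
Local Open Scope ring_scope.
Local Open Scope complex_scope.
Import ComplexField.Normc.
Set Implicit Arguments. Unset Strict Implicit. Unset Printing Implicit Defensive.

(* The zero-energy equations decouple into two sublattices (components 1-3 and
   4-6), and complex conjugation combined with the gauge e^{-ikn} maps the zero
   modes of one onto those of the other; so the kernel is two-dimensional if one
   sublattice carries a nonzero square-summable zero mode, unique up to scaling,
   and trivial otherwise.
   On a sublattice a zero mode is determined by its state (x_n, t_(n-1)) at any
   site, propagated by 2x2 transfer maps with determinant of modulus 1, whose
   square in the bulk acts as P. For a square-summable mode, the wedge of the
   state with the eigenvector of P decaying to the right (resp. to the left) has
   nondecreasing modulus along the chain, hence vanishes: the state is an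
   eigenvector on both sides. Such a mode therefore exists iff the transfer
   across the interface bond c maps v2 to a multiple of v1, which is the stated
   proportionality. *)

Section Plane.
Variable R : realType.
Local Notation C := R[i].

Definition wedge (u v : C * C) : C := u.1 * v.2 - u.2 * v.1.
Definition scalev (s : C) (u : C * C) : C * C := (s * u.1, s * u.2).
Definition sqnorm2 (u : C * C) : R := normc u.1 ^+ 2 + normc u.2 ^+ 2.

Lemma wedge_scalel s u v : wedge (scalev s u) v = s * wedge u v.
Proof. rewrite /wedge /=; ring. Qed.

Lemma wedge_scaler s u v : wedge u (scalev s v) = s * wedge u v.
Proof. rewrite /wedge /=; ring. Qed.

Lemma scale1v u : scalev 1 u = u.
Proof. by case: u => a b; rewrite /scalev /= !mul1r. Qed.

Lemma scale0v u : scalev 0 u = 0.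
Proof. by rewrite /scalev !mul0r. Qed.

Lemma scalevA a b u : scalev a (scalev b u) = scalev (a * b) u.
Proof. by rewrite /scalev /= !mulrA. Qed.

Lemma scalevI u a b : u != 0 -> scalev a u = scalev b u -> a = b.
Proof.
case: u => u1 u2 hu [h1 h2].
have [u10|u1_neq0] := eqVneq u1 0; last exact: mulIf h1.
have u2_neq0 : u2 != 0 by apply: contra hu => /eqP u20; rewrite u10 u20.
exact: mulIf h2.
Qed.

Lemma wedge_eq0P u v : u != 0 -> wedge u v = 0 -> exists g, v = scalev g u.
Proof.
case: u => u1 u2; case: v => v1 v2; rewrite /wedge /scalev /= => hu h.
have [u10|u1_neq0] := eqVneq u1 0.
  have u2_neq0 : u2 != 0 by apply: contra hu => /eqP u20; rewrite u10 u20.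
  exists (v2 / u2); congr (_, _); last by rewrite divfK.
  move/eqP: h; rewrite u10 mul0r sub0r oppr_eq0 mulf_eq0 (negbTE u2_neq0) /=.
  by move/eqP ->; rewrite mulr0.
exists (v1 / u1); congr (_, _); first by rewrite divfK.
apply/eqP; rewrite -subr_eq0; apply/eqP.
have -> : v2 - v1 / u1 * u2 = (u1 * v2 - u2 * v1) / u1 by field.
by rewrite h mul0r.
Qed.

Lemma parallel_wedge_eq0 u v : u != 0 -> v != 0 ->
  (exists g, g != 0 /\ u = scalev g v) <-> wedge u v = 0.
Proof.
move=> hu hv; split=> [[g [_ ->]] | h].
  by rewrite wedge_scalel /wedge [v.1 * _]mulrC subrr mulr0.
have wvu : wedge v u = 0 by rewrite -oppr0 -h /wedge; ring.
have [g hg] := wedge_eq0P hv wvu.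
exists g; split=> //; apply: contra hu => /eqP g0.
by rewrite hg g0 scale0v.
Qed.

Lemma wedge_neq0 u : u != 0 -> exists v, wedge u v != 0.
Proof.
case: u => u1 u2 hu; exists (- u2^*, u1^*); rewrite /wedge /=.
rewrite mulrN opprK -!sqr_normc; apply: contra hu.
rewrite paddr_eq0 ?exprn_ge0 // !expf_eq0 /= !normr_eq0 => /andP[/eqP-> /eqP->].
by [].
Qed.

Lemma normc_ge0 (x : C) : 0 <= normc x.
Proof. by case: x => a b; rewrite /normc sqrtr_ge0. Qed.

Lemma normcX (x : C) n : normc (x ^+ n) = normc x ^+ n.
Proof. by apply: complexI; rewrite rmorphXn /= -[LHS]/(`|x ^+ n|) normrX. Qed.

Lemma normc_conj (x : C) : normc x^* = normc x.
Proof. by case: x => a b; rewrite /normc /= sqrrN. Qed.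

Lemma sqnorm2_ge0 u : 0 <= sqnorm2 u.
Proof. by rewrite addr_ge0 ?sqr_ge0. Qed.

Lemma sqr_normc_wedge_le u v : normc (wedge u v) ^+ 2 <= 2 * sqnorm2 u * sqnorm2 v.
Proof.
have := le_normcD (u.1 * v.2) (- (u.2 * v.1)).
rewrite normcN !normcM -/(wedge u v) /sqnorm2.
have := normc_ge0 (wedge u v); have := normc_ge0 u.1; have := normc_ge0 u.2.
have := normc_ge0 v.1; have := normc_ge0 v.2.
move: (normc (wedge u v)) (normc u.1) (normc u.2) (normc v.1) (normc v.2).
move=> f a b p q q0 p0 b0 a0 f0 hf.
have hf2 : f ^+ 2 <= (a * q + b * p) ^+ 2.
  by rewrite ler_sqr ?nnegrE ?addr_ge0 ?mulr_ge0.
have : 0 <= (a * p) ^+ 2 + (b * q) ^+ 2 + (a * q - b * p) ^+ 2.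
  by rewrite !addr_ge0 ?sqr_ge0.
nra.
Qed.

End Plane.

Section LinearMaps.
Variable R : realType.
Local Notation C := R[i].

Definition homogeneous (Q : C * C -> C * C) := forall s u, Q (scalev s u) = scalev s (Q u).
Definition has_det (Q : C * C -> C * C) (del : C) := forall u v, wedge (Q u) (Q v) = del * wedge u v.

Variables (Q : C * C -> C * C) (del : C).
Hypotheses (hQ : homogeneous Q) (hdet : has_det Q del) (hdel : normc del = 1).

Lemma del_neq0 : del != 0.
Proof. by apply: contra_eqN hdel => /eqP->; rewrite normc0 eq_sym oner_eq0. Qed.

Lemma has_det_eq0 u : Q u = 0 -> u = 0.
Proof.
move=> hu; apply/eqP/negPn/negP => /wedge_neq0 [v].
have := hdet u v; rewrite hu /wedge /= !mul0r subrr => /esym/eqP.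
by rewrite mulf_eq0 (negbTE del_neq0) /= => ->.
Qed.

Lemma eigenvalue_neq0 u mu : u != 0 -> Q u = scalev mu u -> mu != 0.
Proof.
move=> hu hmu; apply: contra hu => /eqP mu0.
by apply/eqP/has_det_eq0; rewrite hmu mu0 scale0v.
Qed.

Lemma normc_wedge_eigen e mu v : Q e = scalev mu e ->
  normc mu * normc (wedge e (Q v)) = normc (wedge e v).
Proof.
move=> he; have := hdet e v; rewrite he wedge_scalel => /(congr1 (@normc R)).
by rewrite !normcM hdel mul1r.
Qed.

(* Under Q^2, [wedge u (Q u)] is multiplied both by l^2 and by del^2; as
   |l| <> 1 = |del| it vanishes. *)
Lemma eigen_sqrt u l : u != 0 -> Q (Q u) = scalev l u -> normc l != 1 ->
  exists2 mu, Q u = scalev mu u & mu ^+ 2 = l.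
Proof.
move=> hu hQ2 hl.
have hw : (l * l - del * del) * wedge u (Q u) = 0.
  have := hdet (Q u) (Q (Q u)); rewrite [in RHS]hdet hQ2 hQ wedge_scalel wedge_scaler.
  by move=> h; rewrite mulrBl -!mulrA h subrr.
have hne : l * l - del * del != 0.
  apply: contra hl; rewrite subr_eq0 => /eqP /(congr1 (@normc R)).
  rewrite !normcM hdel mulr1 => hll; apply/eqP.
  by have := normc_ge0 l; nra.
move/eqP: hw; rewrite mulf_eq0 (negbTE hne) /= => /eqP /(wedge_eq0P hu) [mu hmu].
exists mu => //; apply: (scalevI hu).
by rewrite expr2 -scalevA -hmu -hQ -hmu hQ2.
Qed.

End LinearMaps.

Section Transfer.
Variable R : realType.
Local Notation C := R[i].

(* Solving the three zero-mode equations at a site n for (x_(n+1), t_n) in terms of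
   (x_n, t_(n-1)); the arguments a, d, e stand for c_(n-1)/b_n, d_n/b_n, c_n/b_n. *)
Definition transfer (al ze be a d e : C) (u : C * C) : C * C :=
  let y := - u.1 - a * al * u.2 in
  let t := - u.1 - d * ze * y in
  (- (y + t) / (e * be), t).

Variables (al ze be : C).

Lemma transfer_homogeneous a d e : homogeneous (transfer al ze be a d e).
Proof. by move=> s u; rewrite /transfer /scalev /=; congr (_, _); ring. Qed.

Lemma transfer_det a d e : e != 0 -> be != 0 ->
  has_det (transfer al ze be a d e) (a * al / (e * be)).
Proof. by move=> he hbe u v; rewrite /wedge /transfer /=; field; rewrite he hbe. Qed.

Lemma transfer0 a d e : transfer al ze be a d e 0 = 0.
Proof. by rewrite -(scale0v 0) transfer_homogeneous !scale0v. Qed.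

Lemma transfer_out r e u : r != 0 -> e != 0 -> be != 0 ->
  transfer al ze be r r e u =
  (r / e * (transfer al ze be r r r u).1, (transfer al ze be r r r u).2).
Proof. by move=> hr he hbe; rewrite /transfer /=; congr (_, _); field; rewrite hr he hbe. Qed.

Lemma transfer_in a r u : r != 0 ->
  transfer al ze be a r r u = transfer al ze be r r r (u.1, a / r * u.2).
Proof. by move=> hr; rewrite /transfer /=; congr (_, _); [congr (_ / _)|]; field. Qed.

End Transfer.

Section RealSequences.
Variable R : realType.

Lemma nondecreasing_sqr_summable_eq0 (f : nat -> R) (M : R) :
  (forall m, 0 <= f m) -> (forall m, f m <= f m.+1) ->
  (forall N, \sum_(i < N) f i ^+ 2 <= M) -> f 0%N = 0.
Proof.
move=> f_ge0 f_incr f_sum.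
have f0_le m : f 0%N <= f m by elim: m => [|m IH] //; exact: le_trans (f_incr m).
have sum_ge N : N%:R * f 0%N ^+ 2 <= \sum_(i < N) f i ^+ 2.
  elim: N => [|N IH]; first by rewrite big_ord0 mul0r.
  rewrite big_ord_recr /= -natr1 mulrDl mul1r lerD //.
  by have := f0_le N; have := f_ge0 0%N; nra.
apply/eqP; rewrite eq_le f_ge0 andbT leNgt; apply/negP => f0_gt0.
have f02_gt0 : 0 < f 0%N ^+ 2 by rewrite exprn_gt0.
have M_ge0 : 0 <= M / f 0%N ^+ 2.
  by apply: divr_ge0; [have := f_sum 0%N; rewrite big_ord0 | exact: ltW].
have := archi_boundP M_ge0; set N := Num.Def.archi_bound _ => hN.
rewrite ltr_pdivrMr // in hN.
by have := le_trans (sum_ge N) (f_sum N); lra.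
Qed.

Lemma sum_geometric_le (f : nat -> R) (r : R) : 0 <= r < 1 -> (forall m, 0 <= f m) ->
  (forall m, f m.+1 = r ^+ m * f 1%N) ->
  forall N, \sum_(i < N) f i <= f 0%N + f 1%N / (1 - r).
Proof.
case/andP=> r_ge0 r_lt1 f_ge0 hf N.
have r1_gt0 : 0 < 1 - r by rewrite subr_gt0.
apply: le_trans (_ : \sum_(i < N.+1) f i <= _).
  by rewrite big_ord_recr lerDl.
rewrite big_ord_recl lerD2l.
under eq_bigr do rewrite hf.
rewrite -mulr_suml mulrC ler_wpM2l // -[_^-1]mul1r ler_pdivlMr //.
have -> : (\sum_(i < N) r ^+ i) * (1 - r) = 1 - r ^+ N.
  by rewrite mulrC -opprB mulNr -subrX1 opprB.
by rewrite lerBlDr lerDl exprn_ge0.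
Qed.

End RealSequences.

Lemma wedge_nondecreasing_eq0 (R : realType) (e : R[i] * R[i]) (V : nat -> R[i] * R[i]) (M : R) :
  (forall m, normc (wedge e (V m)) <= normc (wedge e (V m.+1))) ->
  (forall N, \sum_(i < N) sqnorm2 (V i) <= M) -> wedge e (V 0%N) = 0.
Proof.
move=> hmon hV; apply: eq0_normc.
apply: (@nondecreasing_sqr_summable_eq0 _ (fun m => normc (wedge e (V m)))
  (2 * sqnorm2 e * M)) => // [m|N]; first exact: normc_ge0.
apply: le_trans (_ : \sum_(i < N) 2 * sqnorm2 e * sqnorm2 (V i) <= _).
  by apply: ler_sum => i _; exact: sqr_normc_wedge_le.
by rewrite -mulr_sumr ler_wpM2l // mulr_ge0 ?sqnorm2_ge0.
Qed.

Section ZeroModes.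
Variable R : realType.
Local Notation C := R[i].
Variables bp bm dp dm c : R.
Hypotheses (hbp : 0 < bp) (hbm : 0 < bm) (hdp : 0 < bp + dp) (hdm : 0 < bm + dm) (hc : 0 < c).

Lemma rC_neq0 (x : R) : 0 < x -> rC x != 0.
Proof. by move=> hx; apply/eqP => -[/eqP]; rewrite gt_eqF. Qed.

Definition bcoef n : C := rC (Defs.bseq bp bm n).
Definition ccoef n : C := rC (cseq bp bm dp dm c n).
Definition dcoef n : C := rC (dseq bp bm dp dm n).

Lemma bcoef_neq0 n : bcoef n != 0.
Proof. by rewrite /bcoef /Defs.bseq; case: ifP => _; exact: rC_neq0. Qed.

Lemma ccoef_neq0 n : ccoef n != 0.
Proof. by rewrite /ccoef /cseq; case: ifP => _; [|case: ifP => _]; exact: rC_neq0. Qed.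

(* The equations (H u)_j = 0 on one of the two sublattices of the interface, with
   the Bloch phases of the three kinds of bonds as parameters. *)
Definition zero_mode (al ze be : C) (x y t : int -> C) := forall n,
  [/\ bcoef n * x n + bcoef n * y n + ccoef (n - 1) * al * t (n - 1) = 0,
      bcoef n * x n + dcoef n * ze * y n + bcoef n * t n = 0 &
      ccoef n * be * x (n + 1) + bcoef n * y n + bcoef n * t n = 0].

Definition rpos : C := rC (bp + dp) / rC bp.
Definition rneg : C := rC (bm + dm) / rC bm.

Lemma rpos_neq0 : rpos != 0.
Proof. by rewrite mulf_neq0 ?invr_eq0 ?rC_neq0. Qed.

Lemma rneg_neq0 : rneg != 0.
Proof. by rewrite mulf_neq0 ?invr_eq0 ?rC_neq0. Qed.

Lemma bond_ratio_pos n : 0 < n -> ccoef (n - 1) / bcoef n = rpos.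
Proof.
move=> hn; rewrite /ccoef /bcoef /Defs.bseq /cseq.
have h0 : 0 <= n by lia.
have h1 : 0 <= n - 1 by lia.
by rewrite h0 h1.
Qed.

Lemma bond_ratio_neg n : n < 0 -> ccoef (n - 1) / bcoef n = rneg.
Proof.
move=> hn; rewrite /ccoef /bcoef /Defs.bseq /cseq.
have h0 : (0 <= n) = false by lia.
have h1 : (0 <= n - 1) = false by lia.
have h2 : (n - 1 == -1) = false by lia.
by rewrite h0 h1 h2.
Qed.

Definition conjs (f : int -> C) n := (f n)^*.
Definition gauge (w : C) (f : int -> C) n := w ^ n * f n.

Lemma zero_mode_conj al ze be x y t : zero_mode al ze be x y t ->
  zero_mode al^* ze^* be^* (conjs x) (conjs y) (conjs t).
Proof.
move=> h n; case: (h n) => e1 e2 e3; rewrite /conjs.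
by split; [move: e1 | move: e2 | move: e3]; move=> /(congr1 (@conjc _));
  rewrite !(rmorphD, rmorphM) /= !oppr0; apply.
Qed.

Lemma zero_mode_gauge al ze be w x y t : w != 0 -> zero_mode al ze be x y t ->
  zero_mode (al * w) ze (be / w) (gauge w x) (gauge w y) (gauge w t).
Proof.
move=> hw h n; case: (h n) => e1 e2 e3; rewrite /gauge.
have wn : w ^ n = w ^ (n - 1) * w by rewrite -[w in RHS]expr1z -expfzDr // subrK.
have wn1 : w ^ (n + 1) = w ^ n * w by rewrite expfzDr // expr1z.
split.
- by rewrite -[RHS](mulr0 (w ^ n)) -e1 wn; ring.
- by rewrite -[RHS](mulr0 (w ^ n)) -e2; ring.
- by rewrite -[RHS](mulr0 (w ^ n)) -e3 wn1; field.
Qed.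

Lemma zero_mode_ext al ze be x y t x' y' t' : x =1 x' -> y =1 y' -> t =1 t' ->
  zero_mode al ze be x y t -> zero_mode al ze be x' y' t'.
Proof. by move=> hx hy ht h n; case: (h n); rewrite !hx !hy !ht. Qed.

Definition mode_sqnorm (x y t : int -> C) n : R :=
  normc (x n) ^+ 2 + normc (y n) ^+ 2 + normc (t n) ^+ 2.

Definition mode_l2 (x y t : int -> C) := exists M : R, forall N : nat,
  \sum_(i < N) (mode_sqnorm x y t i + mode_sqnorm x y t (Negz i)) <= M.

Lemma mode_l2_ext x y t x' y' t' : x =1 x' -> y =1 y' -> t =1 t' ->
  mode_l2 x y t -> mode_l2 x' y' t'.
Proof.
move=> hx hy ht [M hM]; exists M => N.
by rewrite /mode_sqnorm; under eq_bigr do rewrite -!hx -!hy -!ht; exact: hM.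
Qed.

Lemma mode_sqnorm_ge0 x y t n : 0 <= mode_sqnorm x y t n.
Proof. by rewrite !addr_ge0 ?sqr_ge0. Qed.

Lemma mode_sqnorm_scale x y t (g : C) n n' :
  x n' = g * x n -> y n' = g * y n -> t n' = g * t n ->
  mode_sqnorm x y t n' = normc g ^+ 2 * mode_sqnorm x y t n.
Proof. by rewrite /mode_sqnorm => -> -> ->; rewrite !normcM !exprMn; ring. Qed.

Definition kappa : C := rC ((bp + dp) * (bm + dm) / c ^+ 2).
Definition dilate (u : C * C) : C * C := (u.1, kappa * u.2).

Lemma kappaE : kappa = rC (bp + dp) * rC (bm + dm) / rC c ^+ 2.
Proof.
have rCE (r : R) : rC r = r%:C by [].
by rewrite /kappa !rCE !(rmorphM, fmorphV, rmorphXn).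
Qed.

Section Phases.
Variables al ze be : C.
Hypotheses (hal : al != 0) (hbe : be != 0) (hdel : normc (al / be) = 1).

Definition state (x t : int -> C) n : C * C := (x n, t (n - 1)).

Definition site_transfer n :=
  transfer al ze be (ccoef (n - 1) / bcoef n) (dcoef n / bcoef n) (ccoef n / bcoef n).

Definition Tpos := transfer al ze be rpos rpos rpos.
Definition Tneg := transfer al ze be rneg rneg rneg.

Lemma bulk_transfer_det r : r != 0 -> has_det (transfer al ze be r r r) (al / be).
Proof.
move=> hr u v; rewrite transfer_det //; congr (_ * _).
by field; rewrite hr hbe.
Qed.

Lemma site_transfer_pos n : 0 < n -> site_transfer n = Tpos.
Proof.
move=> hn; rewrite /site_transfer /bcoef /ccoef /dcoef /Defs.bseq /cseq /dseq.
have h0 : 0 <= n by lia.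
have h1 : 0 <= n - 1 by lia.
by rewrite h0 h1.
Qed.

Lemma site_transfer_neg n : n < -1 -> site_transfer n = Tneg.
Proof.
move=> hn; rewrite /site_transfer /bcoef /ccoef /dcoef /Defs.bseq /cseq /dseq.
have h0 : (0 <= n) = false by lia.
have h1 : (0 <= n - 1) = false by lia.
have h2 : (n == -1) = false by lia.
have h3 : (n - 1 == -1) = false by lia.
by rewrite h0 h1 h2 h3.
Qed.

Lemma site_transfer0 : site_transfer 0 = transfer al ze be (rC c / rC bp) rpos rpos.
Proof.
rewrite /site_transfer /bcoef /ccoef /dcoef /Defs.bseq /cseq /dseq.
by rewrite (_ : (0 : int) - 1 = -1) // lexx.
Qed.

Lemma site_transfer_m1 : site_transfer (-1) = transfer al ze be rneg rneg (rC c / rC bm).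
Proof.
rewrite /site_transfer /bcoef /ccoef /dcoef /Defs.bseq /cseq /dseq.
have h : (-1 : int) - 1 = -2 by [].
by rewrite h.
Qed.

Lemma zero_mode_y x y t : zero_mode al ze be x y t -> forall n,
  y n = - x n - ccoef (n - 1) / bcoef n * al * t (n - 1).
Proof.
move=> h n; case: (h n) => e1 _ _; have hb := bcoef_neq0 n.
apply/eqP; rewrite -subr_eq0 -(mulIr_eq0 _ (mulIf hb)); apply/eqP.
by rewrite -[RHS]e1; field.
Qed.

Lemma zero_mode_step x y t : zero_mode al ze be x y t ->
  forall n, state x t (n + 1) = site_transfer n (state x t n).
Proof.
move=> h n; have hy := zero_mode_y h n; case: (h n) => _ e2 e3.
have hb := bcoef_neq0 n; have hc0 := ccoef_neq0 n.
rewrite /state /site_transfer /transfer /= addrK -hy; congr (_, _).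
  apply/eqP; rewrite -subr_eq0 -(mulIr_eq0 _ (mulIf (mulf_neq0 hc0 hbe))).
  by rewrite -[0](subrr 0) -{1}e3 -e2; apply/eqP; field; rewrite hb hc0 hbe.
apply/eqP; rewrite -subr_eq0 -(mulIr_eq0 _ (mulIf hb)); apply/eqP.
by rewrite -[RHS]e2; field.
Qed.

Section FromStates.
Variable s : int -> C * C.
Hypothesis hs : forall n, s (n + 1) = site_transfer n (s n).

Definition xs n := (s n).1.
Definition ts n := (s (n + 1)).2.
Definition ys n := - xs n - ccoef (n - 1) / bcoef n * al * (s n).2.

Lemma state_of_states n : state xs ts n = s n.
Proof. by rewrite /state /xs /ts subrK; case: (s n). Qed.

Lemma zero_mode_of_states : zero_mode al ze be xs ys ts.
Proof.
move=> n; have hb := bcoef_neq0 n; have hc0 := ccoef_neq0 n.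
have ht : ts (n - 1) = (s n).2 by rewrite /ts subrK.
have := hs n; rewrite /site_transfer /transfer => hsn.
split.
- by rewrite ht /ys; field.
- by rewrite /ts hsn /ys /xs /=; field.
- by rewrite /ts /xs hsn /ys /xs /=; field; rewrite hb hc0 hbe.
Qed.

End FromStates.

Lemma zero_mode_eq0 x y t : zero_mode al ze be x y t -> state x t (-1) = 0 ->
  forall n, [/\ x n = 0, y n = 0 & t n = 0].
Proof.
move=> h h0.
have step := zero_mode_step h.
have state0 n : state x t n = 0.
  case: n => m.
    elim: m => [|m IH]; first by rewrite (_ : Posz 0 = -1 + 1) // step h0 /site_transfer transfer0.
    by rewrite -addn1 PoszD step IH /site_transfer transfer0.
  elim: m => [|m IH] //.
  have := step (Negz m.+1); rewrite site_transfer_neg //.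
  rewrite (_ : Negz m.+1 + 1 = Negz m); last by lia.
  by rewrite IH => /esym /(has_det_eq0 (bulk_transfer_det rneg_neq0) hdel).
move=> n; rewrite (zero_mode_y h n).
have := state0 n; have := state0 (n + 1); rewrite /state addrK.
by case=> _ -> [-> ->]; rewrite !mulr0 subr0 oppr0.
Qed.

Lemma zero_mode_unique x y t x' y' t' (g : C) :
  zero_mode al ze be x y t -> zero_mode al ze be x' y' t' ->
  state x t (-1) = scalev g (state x' t' (-1)) ->
  forall n, [/\ x n = g * x' n, y n = g * y' n & t n = g * t' n].
Proof.
move=> h h' hg n.
have hsub : zero_mode al ze be (fun n => x n - g * x' n) (fun n => y n - g * y' n)
                                (fun n => t n - g * t' n).
  move=> m; case: (h m) => e1 e2 e3; case: (h' m) => f1 f2 f3.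
  by split; [rewrite -[RHS](subr0 0) -{1}e1 -(mulr0 g) -f1 |
             rewrite -[RHS](subr0 0) -{1}e2 -(mulr0 g) -f2 |
             rewrite -[RHS](subr0 0) -{1}e3 -(mulr0 g) -f3]; ring.
have [|hx hy ht] := zero_mode_eq0 hsub _ n.
  by move: hg; rewrite /state /scalev => -[-> ->]; rewrite !subrr.
by split; apply/eqP; rewrite -subr_eq0; apply/eqP.
Qed.

Lemma zero_mode_interface x y t : zero_mode al ze be x y t ->
  state x t 1 = site_transfer 0 (site_transfer (-1) (state x t (-1))).
Proof. by move=> h; rewrite -(zero_mode_step h) -(zero_mode_step h). Qed.

Lemma mode_l2_state x y t : mode_l2 x y t -> exists M, forall N,
  \sum_(i < N) sqnorm2 (state x t i.+1) <= M /\
  \sum_(i < N) sqnorm2 (state x t (Negz i)) <= M.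
Proof.
case=> M hM; pose a (i : nat) := mode_sqnorm x y t i + mode_sqnorm x y t (Negz i).
have a_ge0 i : 0 <= a i by rewrite addr_ge0 ?mode_sqnorm_ge0.
have hMa N : \sum_(i < N) a i <= M := hM N.
have sum_a N : \sum_(i < N) (a i + a i.+1) <= M + M.
  rewrite big_split lerD ?hMa //; apply: le_trans (hMa N.+1).
  by rewrite big_ord_recl -[X in X <= _]add0r lerD ?a_ge0.
exists (M + M) => N; split; apply: le_trans (sum_a N); apply: ler_sum => i _.
  rewrite /state (_ : Posz i.+1 - 1 = i); last by lia.
  rewrite /sqnorm2 /= /a /mode_sqnorm; have := normc_ge0 (x i); have := normc_ge0 (y i).
  have := normc_ge0 (y i.+1); have := normc_ge0 (t i.+1);
  have := mode_sqnorm_ge0 x y t (Negz i); have := mode_sqnorm_ge0 x y t (Negz i.+1).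
  rewrite /mode_sqnorm; nra.
rewrite /state (_ : Negz i - 1 = Negz i.+1); last by lia.
rewrite /sqnorm2 /= /a /mode_sqnorm; have := normc_ge0 (x (Negz i.+1)).
have := normc_ge0 (y (Negz i)); have := normc_ge0 (y (Negz i.+1)); have := normc_ge0 (t (Negz i));
have := mode_sqnorm_ge0 x y t i; have := mode_sqnorm_ge0 x y t i.+1.
rewrite /mode_sqnorm; nra.
Qed.

Lemma l2_mode_wedge_pos x y t ep mp : zero_mode al ze be x y t -> mode_l2 x y t ->
  Tpos ep = scalev mp ep -> normc mp <= 1 -> wedge ep (state x t 1) = 0.
Proof.
move=> h hl hep hmp; have [M hM] := mode_l2_state hl.
apply: (@wedge_nondecreasing_eq0 _ ep (fun m => state x t m.+1) M) => [m|N]; last first.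
  by case: (hM N).
have := normc_wedge_eigen (bulk_transfer_det rpos_neq0) hdel (state x t m.+1) hep.
rewrite -/Tpos -(site_transfer_pos (_ : 0 < Posz m.+1)) // -(zero_mode_step h).
rewrite (_ : Posz m.+1 + 1 = m.+2); last by lia.
move=> <-; have := normc_ge0 (wedge ep (state x t m.+2)); have := normc_ge0 mp; nra.
Qed.

Lemma l2_mode_wedge_neg x y t em mm : zero_mode al ze be x y t -> mode_l2 x y t ->
  Tneg em = scalev mm em -> 1 <= normc mm -> wedge em (state x t (-1)) = 0.
Proof.
move=> h hl hem hmm; have [M hM] := mode_l2_state hl.
apply: (@wedge_nondecreasing_eq0 _ em (fun m => state x t (Negz m)) M) => [m|N]; last first.
  by case: (hM N).
have := normc_wedge_eigen (bulk_transfer_det rneg_neq0) hdel (state x t (Negz m.+1)) hem.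
rewrite -/Tneg -(site_transfer_neg (_ : Negz m.+1 < -1)) // -(zero_mode_step h).
rewrite (_ : Negz m.+1 + 1 = Negz m); last by lia.
move=> <-; have := normc_ge0 (wedge em (state x t (Negz m))); nra.
Qed.

Lemma interface_wedge ep em mp mm : Tpos ep = scalev mp ep -> Tneg em = scalev mm em ->
  mp * wedge ep (site_transfer 0 (site_transfer (-1) em)) =
  mm * al * rC c / (be * rC (bp + dp)) * wedge (dilate ep) em.
Proof.
move=> hep hem.
have c0 := rC_neq0 hc; have bp0 := rC_neq0 hbp; have bm0 := rC_neq0 hbm.
have ep0 := rC_neq0 hdp; have em0 := rC_neq0 hdm.
pose D := (em.1, rC c ^+ 2 / (rC (bp + dp) * rC (bm + dm)) * em.2).
have -> : site_transfer 0 (site_transfer (-1) em) = scalev (mm * rC (bm + dm) / rC c) (Tpos D).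
  rewrite site_transfer0 site_transfer_m1 transfer_out ?rneg_neq0 ?mulf_neq0 ?invr_eq0 //.
  rewrite -/Tneg hem transfer_in ?rpos_neq0 // -/Tpos -transfer_homogeneous; congr Tpos.
  by rewrite /scalev /D /rneg /rpos /=; congr (_, _); field; rewrite ?c0 ?bm0 ?bp0 ?ep0 ?em0.
have hX : mp * wedge ep (Tpos D) = al / be * wedge ep D.
  by rewrite -wedge_scalel -hep (bulk_transfer_det rpos_neq0).
rewrite wedge_scaler mulrCA hX.
rewrite /wedge /D /dilate kappaE /=; field.
by rewrite c0 ep0 em0 hbe.
Qed.

Section BulkEigenvectors.
Variables (ep em : C * C) (mp mm : C).
Hypotheses (hep : Tpos ep = scalev mp ep) (hem : Tneg em = scalev mm em).
Hypotheses (ep_neq0 : ep != 0) (em_neq0 : em != 0).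
Hypotheses (hmp : normc mp < 1) (hmm : 1 < normc mm).

Lemma mp_neq0 : mp != 0.
Proof. exact: (eigenvalue_neq0 (bulk_transfer_det rpos_neq0) hdel ep_neq0 hep). Qed.

Lemma mm_neq0 : mm != 0.
Proof. exact: (eigenvalue_neq0 (bulk_transfer_det rneg_neq0) hdel em_neq0 hem). Qed.

Lemma l2_mode_state_m1 x y t : zero_mode al ze be x y t -> mode_l2 x y t ->
  exists g, state x t (-1) = scalev g em.
Proof.
move=> h hl; apply: wedge_eq0P em_neq0 _.
exact: l2_mode_wedge_neg h hl hem (ltW hmm).
Qed.

Lemma l2_mode_eq0 : wedge (dilate ep) em != 0 ->
  forall x y t, zero_mode al ze be x y t -> mode_l2 x y t ->
  forall n, [/\ x n = 0, y n = 0 & t n = 0].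
Proof.
move=> hD x y t h hl; have [g hg] := l2_mode_state_m1 h hl.
apply: (zero_mode_eq0 h); rewrite hg.
have := l2_mode_wedge_pos h hl hep (ltW hmp).
rewrite (zero_mode_interface h) hg /site_transfer !transfer_homogeneous -/(site_transfer _).
rewrite wedge_scaler => /eqP; rewrite mulf_eq0 => /orP[/eqP-> | ]; first exact: scale0v.
move=> /eqP /(congr1 (fun w => mp * w)); rewrite mulr0 (interface_wedge hep hem) => /eqP.
have K_neq0 : mm * al * rC c / (be * rC (bp + dp)) != 0.
  by rewrite !(mulf_neq0, invr_neq0) ?mm_neq0 ?rC_neq0.
by rewrite mulf_eq0 (negbTE K_neq0) (negbTE hD).
Qed.

Hypothesis hcond : wedge (dilate ep) em = 0.

Definition state1 := site_transfer 0 (site_transfer (-1) em).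

(* The zero mode is the decaying eigenvector em continued across the interface,
   where hcond makes it land on the decaying eigenvector ep. *)
Definition glued_state n : C * C :=
  match n with
  | Posz 0 => site_transfer (-1) em
  | Posz m.+1 => scalev (mp ^+ m) state1
  | Negz m => scalev (mm^-1 ^+ m) em
  end.

Lemma state1_eigen : Tpos state1 = scalev mp state1.
Proof.
have : mp * wedge ep state1 = 0 by rewrite (interface_wedge hep hem) hcond mulr0.
move=> /eqP; rewrite mulf_eq0 (negbTE mp_neq0) /= => /eqP /(wedge_eq0P ep_neq0) [g ->].
by rewrite /Tpos transfer_homogeneous -/Tpos hep !scalevA mulrC.
Qed.

Lemma glued_state_step n : glued_state (n + 1) = site_transfer n (glued_state n).
Proof.
case: n => [[|m]|[|m]] /=; try by rewrite expr0 scale1v.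
  rewrite addn1 site_transfer_pos // /Tpos transfer_homogeneous -/Tpos state1_eigen.
  by rewrite scalevA exprSr.
rewrite subn1 /= site_transfer_neg // /Tneg transfer_homogeneous -/Tneg hem scalevA.
by rewrite exprSr -mulrA mulVf ?mulr1 // mm_neq0.
Qed.

Lemma glued_state_pos m : glued_state m.+1 = scalev (mp ^+ m) state1.
Proof. by []. Qed.

Lemma glued_state_neg m : glued_state (Negz m) = scalev (mm^-1 ^+ m) em.
Proof. by []. Qed.

Let xg := xs glued_state.
Let yg := ys glued_state.
Let tg := ts glued_state.

Lemma mode_l2_glued : mode_l2 xg yg tg.
Proof.
set r1 := normc mp ^+ 2; set r2 := normc (mm^-1) ^+ 2.
have r1_bounds : 0 <= r1 < 1 by rewrite /r1 sqr_ge0 /=; have := normc_ge0 mp; move: hmp; nra.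
have r2_bounds : 0 <= r2 < 1.
  rewrite sqr_ge0 /= /r2 normcV; have mm_gt0 : 0 < normc mm by apply: lt_trans hmm.
  have : (normc mm)^-1 < 1 by rewrite invf_lt1.
  have : 0 < (normc mm)^-1 by rewrite invr_gt0.
  nra.
exists ((mode_sqnorm xg yg tg 0 + mode_sqnorm xg yg tg 1 / (1 - r1)) +
        (mode_sqnorm xg yg tg (Negz 0) + mode_sqnorm xg yg tg (Negz 1) / (1 - r2))).
move=> N; rewrite big_split /=; apply: lerD.
- apply: (sum_geometric_le (f := fun i => mode_sqnorm xg yg tg (Posz i))) => // m.
    exact: mode_sqnorm_ge0.
  rewrite /r1 -exprM mulnC exprM -normcX; apply: mode_sqnorm_scale.
  + by rewrite /xg /xs !glued_state_pos; case: state1 => ? ? /=; rewrite expr0 mul1r.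
  + rewrite /yg /ys /xs !bond_ratio_pos // !glued_state_pos.
    by case: state1 => ? ? /=; rewrite expr0 !mul1r; ring.
  + rewrite /tg /ts (_ : Posz m.+1 + 1 = m.+2); last by rewrite -PoszD addn1.
    rewrite (_ : Posz 1 + 1 = 2) // !glued_state_pos.
    by case: state1 => ? ? /=; rewrite exprSr expr1 mulrA.
- apply: (sum_geometric_le (f := fun i => mode_sqnorm xg yg tg (Negz i))) => // m.
    exact: mode_sqnorm_ge0.
  rewrite /r2 -exprM mulnC exprM -normcX; apply: mode_sqnorm_scale.
  + by rewrite /xg /xs !glued_state_neg /= exprSr expr1 mulrA.
  + rewrite /yg /ys /xs !bond_ratio_neg // !glued_state_neg /=.
    by rewrite exprSr expr1; ring.
  + have NegzS1 j : Negz j.+1 + 1 = Negz j by rewrite !NegzE intS opprD addrC addNKr.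
    by rewrite /tg /ts !NegzS1 !glued_state_neg /= expr0 mul1r.
Qed.

Lemma l2_mode_span : exists x0 y0 t0,
  [/\ zero_mode al ze be x0 y0 t0, mode_l2 x0 y0 t0, state x0 t0 (-1) != 0 &
      forall x y t, zero_mode al ze be x y t -> mode_l2 x y t ->
      exists g, forall n, [/\ x n = g * x0 n, y n = g * y0 n & t n = g * t0 n]].
Proof.
have hg := zero_mode_of_states glued_state_step.
have hs : state xg tg (-1) = em.
  by rewrite state_of_states /= expr0 scale1v.
exists xg, yg, tg; split=> //; [exact: mode_l2_glued | by rewrite hs |].
move=> x y t h hl; have [g hgs] := l2_mode_state_m1 h hl.
by exists g; apply: zero_mode_unique h hg _; rewrite hs.
Qed.

End BulkEigenvectors.

End Phases.

End ZeroModes.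

Section Matrices.
Variable R : realType.
Local Notation C := R[i].

Lemma mx2_mul (a b c d a' b' c' d' : C) :
  mx2 a b c d *m mx2 a' b' c' d' =
  mx2 (a * a' + b * c') (a * b' + b * d') (c * a' + d * c') (c * b' + d * d').
Proof.
apply/matrixP => i j; rewrite !mxE big_ord_recl big_ord1 !mxE.
by case: i => [[|[|i]] hi]; case: j => [[|[|j]] hj].
Qed.

Lemma mx2_opp (a b c d : C) : - mx2 a b c d = mx2 (- a) (- b) (- c) (- d).
Proof.
apply/matrixP => i j; rewrite !mxE.
by case: i => [[|[|i]] hi]; case: j => [[|[|j]] hj].
Qed.

Lemma invmx_mx2 (a b c d : C) : a * d - b * c != 0 ->
  invmx (mx2 a b c d) = mx2 (d / (a * d - b * c)) (- b / (a * d - b * c))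
                            (- c / (a * d - b * c)) (a / (a * d - b * c)).
Proof.
move=> hD; set A := mx2 (d / _) _ _ _.
have hAB : mx2 a b c d *m A = 1%:M.
  rewrite mx2_mul (_ : 1%:M = mx2 1 0 0 1); last first.
    apply/matrixP => i j; rewrite !mxE.
    by case: i => [[|[|i]] hi]; case: j => [[|[|j]] hj].
  by congr mx2; field.
have [hu _] := mulmx1_unit hAB.
by rewrite -[RHS](mulKmx hu) hAB mulmx1.
Qed.

Definition vec2 (v : 'cV[C]_2) : C * C := (v ord0 ord0, v (lift ord0 ord0) ord0).

Lemma vec2_mul (a b c d : C) v :
  vec2 (mx2 a b c d *m v) = (a * (vec2 v).1 + b * (vec2 v).2, c * (vec2 v).1 + d * (vec2 v).2).
Proof. by rewrite /vec2 !mxE !big_ord_recl !big_ord0 !mxE /= !addr0. Qed.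

Lemma vec2Z (s : C) v : vec2 (s *: v) = scalev s (vec2 v).
Proof. by rewrite /vec2 /scalev !mxE. Qed.

Lemma vec2_inj : injective vec2.
Proof.
move=> v u [h1 h2]; apply/matrixP => i j; rewrite (ord1 j).
case: i => [[|[|i]] hi] //.
- by rewrite (_ : Ordinal hi = ord0) //; apply: val_inj.
- by rewrite (_ : Ordinal hi = lift ord0 ord0) //; apply: val_inj.
Qed.

Lemma vec2_eq0 v : (vec2 v == 0) = (v == 0).
Proof.
apply/eqP/eqP => [h|->]; last by rewrite /vec2 !mxE.
by apply: vec2_inj; rewrite h /vec2 !mxE.
Qed.

Lemma transfer_sq_mx (B E z : C) v : B != 0 -> E != 0 -> z != 0 ->
  let A1 := mx2 (- B) 0 (- B) (- E * z^-1) in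
  let A2 := mx2 (- B) (- E * z) 0 (- B) in
  let A3 := mx2 (- E * z^-1) 0 (- B) (- B) in
  let A4 := mx2 (- B) (- B) 0 (- E) in
  let A5 := mx2 (- B) 0 (- E * z) (- B) in
  let A6 := mx2 (- E) (- B) 0 (- B) in
  vec2 (- (invmx A6 *m A5 *m invmx A4 *m A3 *m invmx A2 *m A1) *m v) =
  transfer z^-1 z 1 (E / B) (E / B) (E / B) (transfer z^-1 z 1 (E / B) (E / B) (E / B) (vec2 v)).
Proof.
move=> hB hE hz /=.
rewrite !invmx_mx2; try by rewrite mulr0 subr0 mulrNN mulf_neq0.
rewrite !mx2_mul mx2_opp vec2_mul /transfer /=.
by congr (_, _); field; rewrite hB hE hz.
Qed.

End Matrices.

Section BlochPhase.
Variable R : realType.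
Local Notation C := R[i].

Lemma expi_mulN (k : R) : expi k * expi (- k) = 1.
Proof.
rewrite /expi cosN sinN; apply/eqP; rewrite eq_complex /=; apply/andP; split.
  by rewrite mulrN opprK -!expr2 cos2Dsin2.
by apply/eqP; ring.
Qed.

Lemma expi_neq0 (k : R) : expi k != 0.
Proof. by apply: contra_eq_neq (expi_mulN k) => ->; rewrite mul0r eq_sym oner_neq0. Qed.

Lemma expiN (k : R) : expi (- k) = (expi k)^-1.
Proof. by apply: (mulfI (expi_neq0 k)); rewrite expi_mulN mulfV // expi_neq0. Qed.

Lemma normc_expi (k : R) : normc (expi k) = 1.
Proof. by rewrite /normc /expi cos2Dsin2 sqrtr1. Qed.

Lemma conj_expi (k : R) : (expi k)^* = expi (- k).
Proof. by rewrite /expi /= cosN sinN. Qed.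

Lemma conj_expi_inv (k : R) : (expi k)^* = (expi k)^-1.
Proof. by rewrite conj_expi expiN. Qed.

Lemma expz_mul_conj (z : C) (n : int) : z != 0 -> z^* = z^-1 -> z ^ n * (z ^ n)^* = 1.
Proof.
move=> hz hzc; rewrite fmorphXz /= (_ : Num.conj z = z^-1); last exact: hzc.
rewrite exprz_inv -expfzDr //.
by rewrite subrr expr0z.
Qed.

Lemma normc_expiz (k : R) (n : int) : normc (expi k ^ n) = 1.
Proof.
have := congr1 (@normc R) (expz_mul_conj n (expi_neq0 k) (conj_expi_inv k)).
rewrite normcM normc_conj normc1 => h.
by have := normc_ge0 (expi k ^ n); nra.
Qed.

Definition bulk_transfer (b eps k : R) :=
  let r := rC (b + eps) / rC b in transfer (expi (- k)) (expi k) 1 r r r.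

Lemma Pmat_transfer (b eps k : R) v : 0 < b -> 0 < b + eps ->
  vec2 (Pmat b eps k *m v) = bulk_transfer b eps k (bulk_transfer b eps k (vec2 v)).
Proof.
move=> hb hbe; rewrite /Pmat /bulk_transfer expiN.
by apply: transfer_sq_mx; rewrite ?expi_neq0 ?rC_neq0.
Qed.

Lemma bulk_eigen (b eps k : R) v l : 0 < b -> 0 < b + eps -> v != 0 ->
  Pmat b eps k *m v = l *: v -> normc l != 1 ->
  exists2 mu, bulk_transfer b eps k (vec2 v) = scalev mu (vec2 v) & normc mu ^+ 2 = normc l.
Proof.
move=> hb hbe hv hP hl.
have r_neq0 : rC (b + eps) / rC b != 0 by rewrite mulf_neq0 ?invr_eq0 ?rC_neq0.
have hdet := bulk_transfer_det (expi (- k)) (expi k) (oner_neq0 _) r_neq0.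
have hdel : normc (expi (- k) / 1) = 1 by rewrite divr1 normc_expi.
have hv2 : vec2 v != 0 by rewrite vec2_eq0.
have hQ2 : bulk_transfer b eps k (bulk_transfer b eps k (vec2 v)) = scalev l (vec2 v).
  by rewrite -Pmat_transfer // hP vec2Z.
have [mu hmu <-] := eigen_sqrt (transfer_homogeneous _ _ _ _ _ _) hdet hdel hv2 hQ2 hl.
by exists mu; rewrite ?normcX.
Qed.

End BlochPhase.

Section Hamiltonian.
Variable R : realType.
Local Notation C := R[i].
Variables bp bm dp dm c k : R.
Hypotheses (hdp : 0 < bp + dp) (hdm : 0 < bm + dm) (hc : 0 < c).

(* The two sublattices: components 4, 5, 6 carry the phases of Pmat, components
   1, 2, 3 the complex-conjugate ones. *)
Local Notation zero_modeB := (zero_mode bp bm dp dm c (expi (- k)) (expi k) 1).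
Local Notation zero_modeA := (zero_mode bp bm dp dm c 1 (expi (- k)) (expi k)).

Definition pack6 (xA yA tA xB yB tB : int -> C) : seq6 R := fun n j =>
  match nat_of_ord j with
  | 0 => xA n | 1 => yA n | 2 => tA n | 3 => xB n | 4 => yB n | _ => tB n
  end.

Lemma pack6_cmp (u : seq6 R) n j :
  u n j = pack6 (cmp u 1) (cmp u 2) (cmp u 3) (cmp u 4) (cmp u 5) (cmp u 6) n j.
Proof.
rewrite /pack6 /cmp; case: j => [[|[|[|[|[|[|j]]]]]] hj] //=;
  by congr (u n _); apply: val_inj; rewrite /= inordK.
Qed.

Lemma HI_eq0 (u : seq6 R) : (forall n j, HI bp bm dp dm c k u n j = 0) <->
  zero_modeA (cmp u 1) (cmp u 2) (cmp u 3) /\ zero_modeB (cmp u 4) (cmp u 5) (cmp u 6).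
Proof.
split=> [H | [hA hB] n j].
  split=> n; split; apply/eqP; rewrite -oppr_eq0; apply/eqP.
  - by rewrite -(H n (@Ordinal 6 3 isT)) /HI /bcoef /ccoef /dcoef /=; ring.
  - by rewrite -(H n (@Ordinal 6 4 isT)) /HI /bcoef /ccoef /dcoef /=; ring.
  - by rewrite -(H n (@Ordinal 6 5 isT)) /HI /bcoef /ccoef /dcoef /=; ring.
  - by rewrite -(H n (@Ordinal 6 0 isT)) /HI /bcoef /ccoef /dcoef /=; ring.
  - by rewrite -(H n (@Ordinal 6 1 isT)) /HI /bcoef /ccoef /dcoef /=; ring.
  - by rewrite -(H n (@Ordinal 6 2 isT)) /HI /bcoef /ccoef /dcoef /=; ring.
case: (hA n) (hB n) => a1 a2 a3 [b1 b2 b3].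
case: j => [[|[|[|[|[|[|j]]]]]] hj] //=; rewrite /HI /=; apply/eqP; rewrite -oppr_eq0.
- by rewrite -b1 /bcoef /ccoef; apply/eqP; ring.
- by rewrite -b2 /bcoef /dcoef; apply/eqP; ring.
- by rewrite -b3 /bcoef /ccoef; apply/eqP; ring.
- by rewrite -a1 /bcoef /ccoef; apply/eqP; ring.
- by rewrite -a2 /bcoef /dcoef; apply/eqP; ring.
- by rewrite -a3 /bcoef /ccoef; apply/eqP; ring.
Qed.

Definition mirror (f : int -> C) : int -> C := gauge (expi (- k)) (conjs f).

Lemma normc_mirror f n : normc (mirror f n) = normc (f n).
Proof. by rewrite /mirror /gauge /conjs normcM normc_expiz normc_conj mul1r. Qed.

Lemma mirror_scale f f0 g n : mirror f n = g * f0 n -> f n = g^* * mirror f0 n.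
Proof.
have conjcM (a b : C) : conjc (a * b) = conjc a * conjc b by rewrite rmorphM.
have e : conjc (expi (- k) ^ n) * expi (- k) ^ n = 1.
  by rewrite mulrC; apply: expz_mul_conj; rewrite ?expi_neq0 ?conj_expi_inv.
rewrite /mirror /gauge /conjs => h.
by rewrite -[f n]conjcK -[conjc (f n)]mul1r -e -mulrA h !conjcM conjcK mulrCA.
Qed.

Lemma zero_mode_mirrorB x y t : zero_modeB x y t -> zero_modeA (mirror x) (mirror y) (mirror t).
Proof.
move=> /zero_mode_conj /(zero_mode_gauge (expi_neq0 (- k))).
by rewrite !conj_expi opprK conjc1 expi_mulN div1r -expiN opprK.
Qed.

Lemma zero_mode_mirrorA x y t : zero_modeA x y t -> zero_modeB (mirror x) (mirror y) (mirror t).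
Proof.
move=> /zero_mode_conj /(zero_mode_gauge (expi_neq0 (- k))).
by rewrite !conj_expi opprK conjc1 mul1r divff // expi_neq0.
Qed.

Lemma mode_sqnorm_mirror x y t n :
  mode_sqnorm (mirror x) (mirror y) (mirror t) n = mode_sqnorm x y t n.
Proof. by rewrite /mode_sqnorm !normc_mirror. Qed.

Lemma mode_l2_mirror x y t : mode_l2 x y t -> mode_l2 (mirror x) (mirror y) (mirror t).
Proof. by case=> M hM; exists M => N; under eq_bigr do rewrite !mode_sqnorm_mirror. Qed.

Lemma sum6_sqr_norm (u : seq6 R) (i : nat) :
  \sum_(j < 6) (`|u (i%:Z) j| ^+ 2 + `|u (- (i%:Z) - 1) j| ^+ 2) =
  ((mode_sqnorm (cmp u 1) (cmp u 2) (cmp u 3) i + mode_sqnorm (cmp u 1) (cmp u 2) (cmp u 3) (Negz i))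
 + (mode_sqnorm (cmp u 4) (cmp u 5) (cmp u 6) i + mode_sqnorm (cmp u 4) (cmp u 5) (cmp u 6) (Negz i)))%:C.
Proof.
have sqr_norm (x : C) : `|x| ^+ 2 = (normc x ^+ 2)%:C by rewrite rmorphXn.
rewrite (_ : - (i%:Z) - 1 = Negz i); last by rewrite NegzE intS opprD addrC.
under eq_bigr => j _ do rewrite (pack6_cmp u i) (pack6_cmp u (Negz i)) !sqr_norm.
by rewrite !big_ord_recl big_ord0 /= /mode_sqnorm -!rmorphD; congr (_%:C); ring.
Qed.

Lemma l2_modes (u : seq6 R) : l2 u <->
  mode_l2 (cmp u 1) (cmp u 2) (cmp u 3) /\ mode_l2 (cmp u 4) (cmp u 5) (cmp u 6).
Proof.
pose a (i : nat) := mode_sqnorm (cmp u 1) (cmp u 2) (cmp u 3) i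
                  + mode_sqnorm (cmp u 1) (cmp u 2) (cmp u 3) (Negz i).
pose b (i : nat) := mode_sqnorm (cmp u 4) (cmp u 5) (cmp u 6) i
                  + mode_sqnorm (cmp u 4) (cmp u 5) (cmp u 6) (Negz i).
have ge0 (i : nat) : 0 <= a i /\ 0 <= b i by split; rewrite addr_ge0 ?mode_sqnorm_ge0.
have sumE M N : (\sum_(i < N) \sum_(j < 6) (`|u (i%:Z) j| ^+ 2 + `|u (- (i%:Z) - 1) j| ^+ 2)
                  <= rC M) = (\sum_(i < N) (a i + b i) <= M).
  under eq_bigr do rewrite sum6_sqr_norm.
  by rewrite -rmorph_sum /= -[rC M]/(M%:C) lecR.
rewrite /l2; split=> [[M hM] | [[MA hA] [MB hB]]].
  split; exists M => N; apply: le_trans (_ : \sum_(i < N) (a i + b i) <= M); rewrite -?sumE //;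
    by apply: ler_sum => i _; case: (ge0 i) => ? ?; rewrite ?lerDl ?lerDr.
by exists (MA + MB) => N; rewrite sumE big_split; apply: lerD.
Qed.

Lemma kernel_l2_modes (u : seq6 R) : kernel_l2 (HI bp bm dp dm c k) u <->
  (zero_modeA (cmp u 1) (cmp u 2) (cmp u 3) /\ mode_l2 (cmp u 1) (cmp u 2) (cmp u 3)) /\
  (zero_modeB (cmp u 4) (cmp u 5) (cmp u 6) /\ mode_l2 (cmp u 4) (cmp u 5) (cmp u 6)).
Proof.
rewrite /kernel_l2 l2_modes HI_eq0.
by split=> [[[lA lB] [zA zB]] | [[zA lA] [zB lB]]].
Qed.

Lemma dim2_absurd (K : seq6 R -> Prop) :
  (forall u, K u -> forall n j, u n j = 0) -> ~ dim2 K.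
Proof.
move=> hK [u1 [u2 [k1 [k2 [hind _]]]]].
have [n j|/eqP] := hind 1 0; last by rewrite oner_eq0.
by rewrite (hK u1 k1) (hK u2 k2) !mulr0 addr0.
Qed.

Lemma kernel_trivial :
  (forall x y t, zero_modeB x y t -> mode_l2 x y t -> forall n, [/\ x n = 0, y n = 0 & t n = 0]) ->
  forall u, kernel_l2 (HI bp bm dp dm c k) u -> forall n j, u n j = 0.
Proof.
move=> hB u /kernel_l2_modes [[zA lA] [zB lB]] n j.
have [a1 a2 a3] := hB _ _ _ (zero_mode_mirrorA zA) (mode_l2_mirror lA) n.
have [b1 b2 b3] := hB _ _ _ zB lB n.
have unmirror f : mirror f n = 0 -> f n = 0.
  by move=> /(congr1 (@normc R)); rewrite normc_mirror normc0; exact: eq0_normc.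
by rewrite pack6_cmp /pack6; case: (nat_of_ord j) => [|[|[|[|[|?]]]]]; by [apply: unmirror | ].
Qed.

Lemma kernel_pack6 xA yA tA xB yB tB :
  zero_modeA xA yA tA -> mode_l2 xA yA tA -> zero_modeB xB yB tB -> mode_l2 xB yB tB ->
  kernel_l2 (HI bp bm dp dm c k) (pack6 xA yA tA xB yB tB).
Proof.
move=> zA lA zB lB; apply/kernel_l2_modes; set u := pack6 _ _ _ _ _ _.
have [hx hy ht] : [/\ xA =1 cmp u 1, yA =1 cmp u 2 & tA =1 cmp u 3].
  by split=> n; rewrite /cmp /u /pack6 /= inordK.
have [hx' hy' ht'] : [/\ xB =1 cmp u 4, yB =1 cmp u 5 & tB =1 cmp u 6].
  by split=> n; rewrite /cmp /u /pack6 /= inordK.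
by split; split; [exact: zero_mode_ext zA | exact: mode_l2_ext lA |
  exact: zero_mode_ext zB | exact: mode_l2_ext lB].
Qed.

Lemma kernel_dim2 x0 y0 t0 :
  zero_modeB x0 y0 t0 -> mode_l2 x0 y0 t0 -> state x0 t0 (-1) != 0 ->
  (forall x y t, zero_modeB x y t -> mode_l2 x y t ->
     exists g, forall n, [/\ x n = g * x0 n, y n = g * y0 n & t n = g * t0 n]) ->
  dim2 (kernel_l2 (HI bp bm dp dm c k)).
Proof.
move=> z0 l0 s0 span0.
have zero0 al ze be : zero_mode bp bm dp dm c al ze be (fun=> 0) (fun=> 0) (fun=> 0).
  by move=> n; split; rewrite !mulr0 !addr0.
have l2_0 : mode_l2 (fun=> 0) (fun=> 0) (fun=> 0 : C).
  by exists 0 => N; rewrite big1 // => i _; rewrite /mode_sqnorm normc0 expr0n /= !addr0.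
exists (pack6 (mirror x0) (mirror y0) (mirror t0) (fun=> 0) (fun=> 0) (fun=> 0)).
exists (pack6 (fun=> 0) (fun=> 0) (fun=> 0) x0 y0 t0).
split; [|split; [|split]].
- exact: kernel_pack6 (zero_mode_mirrorB z0) (mode_l2_mirror l0) (zero0 _ _ _) l2_0.
- exact: kernel_pack6 (zero0 _ _ _) l2_0 z0 l0.
- have [n x0_t0] : exists n, x0 n != 0 \/ t0 n != 0.
    move: s0; rewrite /state -[0]/(0, 0) xpair_eqE negb_and.
    by case/orP; [exists (-1); left | exists (-1 - 1); right].
  have mirror_neq0 f : f n != 0 -> mirror f n != 0.
    by apply: contra => /eqP /(congr1 (@normc R)); rewrite normc_mirror normc0 => /eq0_normc ->.
  move=> a1 a2 h; case: x0_t0 => [hx | ht].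
  + have := h n (@Ordinal 6 0 isT); have := h n (@Ordinal 6 3 isT); rewrite /pack6 /=.
    rewrite mulr0 add0r mulr0 addr0 => /eqP; rewrite mulf_eq0 (negbTE hx) orbF => /eqP ->.
    by move=> /eqP; rewrite mulf_eq0 (negbTE (mirror_neq0 _ hx)) orbF => /eqP ->.
  + have := h n (@Ordinal 6 2 isT); have := h n (@Ordinal 6 5 isT); rewrite /pack6 /=.
    rewrite mulr0 add0r mulr0 addr0 => /eqP; rewrite mulf_eq0 (negbTE ht) orbF => /eqP ->.
    by move=> /eqP; rewrite mulf_eq0 (negbTE (mirror_neq0 _ ht)) orbF => /eqP ->.
- move=> u /kernel_l2_modes [[zA lA] [zB lB]].
  have [gA hA] := span0 _ _ _ (zero_mode_mirrorA zA) (mode_l2_mirror lA).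
  have [gB hB] := span0 _ _ _ zB lB.
  exists gA^*, gB => n j; have [a1 a2 a3] := hA n; have [b1 b2 b3] := hB n.
  rewrite pack6_cmp /pack6; case: (nat_of_ord j) => [|[|[|[|[|?]]]]];
    rewrite ?mulr0 ?addr0 ?add0r //; exact: mirror_scale.
Qed.

Lemma interface_condition (v1 v2 : 'cV[C]_2) : v1 != 0 -> v2 != 0 ->
  (exists g, g != 0 /\ mx2 1 0 0 (kappa bp bm dp dm c) *m v1 = g *: v2) <->
  wedge (dilate bp bm dp dm c (vec2 v1)) (vec2 v2) = 0.
Proof.
move=> hv1 hv2.
have dilateE : vec2 (mx2 1 0 0 (kappa bp bm dp dm c) *m v1) = dilate bp bm dp dm c (vec2 v1).
  by rewrite vec2_mul /dilate !mul1r !mul0r addr0 add0r.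
have kappa_neq0 : kappa bp bm dp dm c != 0.
  by rewrite kappaE !(mulf_neq0, invr_neq0) ?expf_neq0 ?rC_neq0.
rewrite -parallel_wedge_eq0 ?vec2_eq0 //; last first.
  apply: contra hv1; rewrite -vec2_eq0 /dilate -[0]/(0, 0) !xpair_eqE mulf_eq0.
  by rewrite (negbTE kappa_neq0).
split=> -[g [g0 h]]; exists g; split=> //; first by rewrite -dilateE h vec2Z.
by apply: vec2_inj; rewrite dilateE h vec2Z.
Qed.

End Hamiltonian.

Theorem theorem6 (R : realType) (bp bm dp dm c k : R)
  (hbp : 0 < bp) (hbm : 0 < bm) (hdp : 0 < bp + dp) (hdm : 0 < bm + dm) (hc : 0 < c)
  (hk : - pi <= k < pi) (hnd : k != 0 \/ (dp != 0 /\ dm != 0))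
  (v1 v2 : 'cV[R[i]]_2) (l1 l2 : R[i])
  (hv1 : v1 != 0) (hP1 : Pmat bp dp k *m v1 = l1 *: v1) (hl1 : `|l1| < 1)
  (hv2 : v2 != 0) (hP2 : Pmat bm dm k *m v2 = l2 *: v2) (hl2 : 1 < `|l2|) :
  dim2 (kernel_l2 (HI bp bm dp dm c k)) <->
  exists g : R[i], g != 0 /\
    mx2 1 0 0 (rC ((bp + dp) * (bm + dm) / c ^+ 2)) *m v1 = g *: v2.
Proof.
(* [hk] and [hnd] only ensure that eigenvalues [l1], [l2] as assumed exist. *)
have hl1' : normc l1 < 1 by rewrite -ltcR.
have hl2' : 1 < normc l2 by rewrite -ltcR.
have [mu1 hmu1 hmu1n] := bulk_eigen hbp hdp hv1 hP1 (negbT (lt_eqF hl1')).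
have [mu2 hmu2 hmu2n] := bulk_eigen hbm hdm hv2 hP2 (negbT (gt_eqF hl2')).
have hm1 : normc mu1 < 1 by move: hl1'; rewrite -hmu1n; have := normc_ge0 mu1; nra.
have hm2 : 1 < normc mu2 by move: hl2'; rewrite -hmu2n; have := normc_ge0 mu2; nra.
have hdel : normc (expi (- k) / 1) = 1 by rewrite divr1 normc_expi.
have [e1 e2] : vec2 v1 != 0 /\ vec2 v2 != 0 by rewrite !vec2_eq0.
have hal := expi_neq0 (- k); have hbe := oner_neq0 R[i].
rewrite -/(kappa bp bm dp dm c) interface_condition //; split=> [hdim | hcond].
  apply/eqP/negPn/negP => hne; apply: dim2_absurd hdim; apply: kernel_trivial.
  exact: (l2_mode_eq0 hbp hbm hdp hdm hc hal hbe hdel hmu1 hmu2 e2 hm1 hm2 hne).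
have [x0 [y0 [t0 [z0 l0 s0 span0]]]] :=
  l2_mode_span hbp hbm hdp hdm hc hal hbe hdel hmu1 hmu2 e1 e2 hm1 hm2 hcond.
exact: kernel_dim2 z0 l0 s0 span0.
Qed.
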